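(* Let $\mathbf A\in\mathbb R^{m\times n}$, let $k\ge 1$ be an integer, and let $\alpha>0$ and $c>0$ be fixed. The following are equivalent: (i) for every $k$-sparse vector $\mathbf x^0\in\mathbb R^n$ with $\|\mathbf x^0\|_\infty=c$, the vector $\mathbf x^0$ is the unique minimizer of problem (P2) with $\mathbf b=\mathbf A\mathbf x^0$; (ii) for every $\mathbf h\in\mathrm{Null}(\mathbf A)$ and every coordinate set $\mathcal S\subset\{1,\dots,n\}$ with $|\mathcal S|\le k$, $$\Big(1+\frac{c}{\alpha}\Big)\|\mathbf h_{\mathcal S}\|_1\le \|\mathbf h_{\mathcal S^c}\|_1 .$$
   Context: Problem (P2) is $\min_{\mathbf x\in\mathbb R^n}\{\|\mathbf x\|_1+\frac{1}{2\alpha}\|\mathbf x\|_2^2:\ \mathbf A\mathbf x=\mathbf b\}$. A vector is $k$-sparse if it has at most $k$ nonzero entries. For a vector $\mathbf h$ and index set $\mathcal S$, $\mathbf h_{\mathcal S}$ denotes the restriction of $\mathbf h$ to the coordinates in $\mathcal S$, and $\mathcal S^c=\{1,\dots,n\}\setminus\mathcal S$. *)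

(* Real numbers are an arbitrary realFieldType R
   (instantiating R with the reals gives the paper's statement). *)
From HB Require Import structures.
From mathcomp Require Import all_boot all_order all_algebra.
Set Implicit Arguments. Unset Strict Implicit. Unset Printing Implicit Defensive.
Import Order.TTheory GRing.Theory Num.Theory.
Local Open Scope ring_scope.

Section Defs.
Variable R : realFieldType.

Definition norm1 n (x : 'cV[R]_n) : R := \sum_(i < n) `|x i ord0|.
Definition norm2sq n (x : 'cV[R]_n) : R := \sum_(i < n) (x i ord0) ^+ 2.
Definition norminf n (x : 'cV[R]_n) : R := \big[Num.max/0]_(i < n) `|x i ord0|.

Definition ksparse n (k : nat) (x : 'cV[R]_n) : bool :=
  (#|[set i : 'I_n | x i ord0 != 0%R]| <= k)%N.

Definition restrict n (h : 'cV[R]_n) (S : {set 'I_n}) : 'cV[R]_n :=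
  \col_i (if i \in S then h i ord0 else 0).

Definition P2obj n (alpha : R) (x : 'cV[R]_n) : R :=
  norm1 x + (2 * alpha)^-1 * norm2sq x.

Definition P2_minimizer m n (A : 'M[R]_(m, n)) (b : 'cV[R]_m) (alpha : R)
    (x : 'cV[R]_n) : Prop :=
  A *m x = b /\ forall y : 'cV[R]_n, A *m y = b -> P2obj alpha x <= P2obj alpha y.

Definition P2_unique_minimizer m n (A : 'M[R]_(m, n)) (b : 'cV[R]_m) (alpha : R)
    (x : 'cV[R]_n) : Prop :=
  P2_minimizer A b alpha x /\
  forall y : 'cV[R]_n, P2_minimizer A b alpha y -> y = x.

End Defs.

From HB Require Import structures.
From mathcomp Require Import all_boot all_order all_algebra.
From mathcomp Require Import ring lra.
Set Implicit Arguments. Unset Strict Implicit. Unset Printing Implicit Defensive.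
Import Order.TTheory GRing.Theory Num.Theory.
Local Open Scope ring_scope.

(* Write a = 1/(2 alpha).  The objective of (P2) is separable, so the
   increment P2obj(x + h) - P2obj(x) is a sum of one-dimensional increments
   |x_i + h_i| - |x_i| + a ((x_i + h_i)^2 - x_i^2).

   Sufficiency: if |x_i| <= c, the increment is at least
   a h_i^2 - (1 + 2 a c) |h_i| on the support S of x and at least
   a h_i^2 + |h_i| off it; summing gives
   a ||h||_2^2 + (||h_{S^c}||_1 - (1 + c/alpha) ||h_S||_1).  Under the null
   space property every feasible y = x + h therefore gains at least
   a ||h||_2^2, so x is the unique minimiser (P2obj_growth,
   unique_minimizer_of_growth).

   Necessity: given h in Null(A) and a nonempty S (empty S is trivial), the
   witness x0 equal to -c sgn h on S and 0 elsewhere is |S|-sparse with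
   ||x0||_inf = c.  Along the feasible ray x0 + t h the increment is at most
   t (||h_{S^c}||_1 - (1 + c/alpha) ||h_S||_1) + t^2 a ||h||_2^2 for small
   t > 0 (P2obj_ray_upper); minimality of x0 forces the linear coefficient to
   be nonnegative, which is the null space inequality
   (nsp_of_witness_minimizer). *)

Section Norms.
Variable R : realFieldType.

Lemma norm1_ge0 n (x : 'cV[R]_n) : 0 <= norm1 x.
Proof. by apply: sumr_ge0 => i _; rewrite normr_ge0. Qed.

Lemma norm2sq_ge0 n (x : 'cV[R]_n) : 0 <= norm2sq x.
Proof. by apply: sumr_ge0 => i _; rewrite sqr_ge0. Qed.

Lemma norm2sq_eq0 n (x : 'cV[R]_n) : norm2sq x = 0 -> x = 0.
Proof.
move=> /eqP; rewrite /norm2sq psumr_eq0; last by move=> i _; rewrite sqr_ge0.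
move=> /allP x2_eq0; apply/matrixP => i j; rewrite (ord1 j) mxE.
by have /= := x2_eq0 i (mem_index_enum i); rewrite sqrf_eq0 => /eqP.
Qed.

Lemma coord_le_norm1 n (h : 'cV[R]_n) i : `|h i ord0| <= norm1 h.
Proof.
rewrite /norm1 (bigD1 i) //= lerDl; apply: sumr_ge0 => j _; exact: normr_ge0.
Qed.

Lemma norm1_restrict0 n (h : 'cV[R]_n) : norm1 (restrict h set0) = 0.
Proof. by rewrite /norm1 big1 // => i _; rewrite mxE in_set0 normr0. Qed.

Lemma nsp_gap_sum n (q : R) (h : 'cV[R]_n) (S : {set 'I_n}) :
  norm1 (restrict h (~: S)) - q * norm1 (restrict h S) =
  \sum_i (if i \in S then - q * `|h i ord0| else `|h i ord0|).
Proof.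
rewrite /norm1 mulr_sumr -sumrB; apply: eq_bigr => i _.
by rewrite !mxE in_setC; case: (i \in S); rewrite /= normr0 ?mulr0; lra.
Qed.

Lemma P2obj_diff n (alpha : R) (x y : 'cV[R]_n) :
  P2obj alpha y - P2obj alpha x =
  \sum_i (`|y i ord0| - `|x i ord0|
          + (2 * alpha)^-1 * ((y i ord0) ^+ 2 - (x i ord0) ^+ 2)).
Proof. by rewrite /P2obj /norm1 /norm2sq big_split /= sumrB -mulr_sumr sumrB; ring. Qed.

End Norms.

Section Scalar.
Variable R : realFieldType.

Lemma increment_lower (x h a c : R) : 0 < a -> `|x| <= c ->
  a * h ^+ 2 - (1 + 2 * a * c) * `|h| <= `|x + h| - `|x| + a * ((x + h) ^+ 2 - x ^+ 2).
Proof.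
move=> a_gt0 x_le_c.
have triangle : `|x| - `|h| <= `|x + h| by rewrite lerB_normD.
have cross : - (c * `|h|) <= x * h.
  have : `|x * h| <= c * `|h| by rewrite normrM ler_wpM2r.
  have : - `|x * h| <= x * h by rewrite lerNnormlW.
  lra.
have : a * (- (c * `|h|)) <= a * (x * h) by rewrite ler_wpM2l // ltW.
nra.
Qed.

Lemma increment_upper_opposite (x h a c t : R) : 0 < a -> 0 < c -> 0 < t ->
  t * `|h| <= c -> x = (if 0 <= h then - c else c) ->
  `|x + t * h| - `|x| + a * ((x + t * h) ^+ 2 - x ^+ 2)
    <= t * (- (1 + 2 * a * c) * `|h|) + t ^+ 2 * (a * h ^+ 2).
Proof.
move=> a_gt0 c_gt0 t_gt0 step_le ->.
have [h_ge0|h_lt0] := lerP 0 h.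
  rewrite (ger0_norm h_ge0) in step_le *.
  by rewrite ler0_norm ?normrN ?gtr0_norm //; nra.
rewrite (ltr0_norm h_lt0) in step_le *.
by rewrite ger0_norm ?gtr0_norm //; nra.
Qed.

Lemma ge0_of_small_perturbations (Q D t0 : R) : 0 < t0 -> 0 <= D ->
  (forall t, 0 < t -> t <= t0 -> 0 <= Q + t * D) -> 0 <= Q.
Proof.
move=> t0_gt0 D_ge0 small; rewrite leNgt; apply/negP => Q_lt0.
set t := Num.min t0 (- Q / (2 * (D + 1))).
have bound_gt0 : 0 < - Q / (2 * (D + 1)).
  by rewrite divr_gt0 ?oppr_gt0 // mulr_gt0 //; lra.
have t_gt0 : 0 < t by rewrite lt_min t0_gt0.
have t_le : t <= t0 by rewrite ge_min lexx.
have tD_small : t * (2 * (D + 1)) <= - Q.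
  by rewrite -ler_pdivlMr ?ge_min ?lexx ?orbT //; lra.
have := small t t_gt0 t_le; nra.
Qed.

End Scalar.

Section Sufficiency.
Variables (R : realFieldType) (n : nat) (alpha c : R).
Hypothesis alpha_gt0 : 0 < alpha.

Lemma P2obj_growth (x h : 'cV[R]_n) :
  (forall i, `|x i ord0| <= c) ->
  let S := [set i | x i ord0 != 0] in
  (1 + c / alpha) * norm1 (restrict h S) <= norm1 (restrict h (~: S)) ->
  (2 * alpha)^-1 * norm2sq h <= P2obj alpha (x + h) - P2obj alpha x.
Proof.
move=> x_le_c S nsp.
have a_gt0 : 0 < (2 * alpha)^-1 by rewrite invr_gt0 mulr_gt0.
have q_eq : c / alpha = 2 * (2 * alpha)^-1 * c by field; rewrite gt_eqF.
apply: le_trans (_ : (2 * alpha)^-1 * norm2sq h + (norm1 (restrict h (~: S))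
   - (1 + c / alpha) * norm1 (restrict h S)) <= _); first by rewrite lerDl subr_ge0.
rewrite nsp_gap_sum /norm2sq mulr_sumr -big_split P2obj_diff /=.
apply: ler_sum => i _; rewrite mxE inE q_eq.
case: (x i ord0 =P 0) => [-> | _] /=.
  by rewrite normr0 add0r subr0; lra.
by have := increment_lower (h i ord0) a_gt0 (x_le_c i); lra.
Qed.

Lemma unique_minimizer_of_growth m (A : 'M[R]_(m, n)) (x : 'cV[R]_n) :
  (forall y, A *m y = A *m x ->
     (2 * alpha)^-1 * norm2sq (y - x) <= P2obj alpha y - P2obj alpha x) ->
  P2_unique_minimizer A (A *m x) alpha x.
Proof.
move=> growth.
have a_gt0 : 0 < (2 * alpha)^-1 by rewrite invr_gt0 mulr_gt0.
have gain_ge0 y : 0 <= (2 * alpha)^-1 * norm2sq (y - x).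
  by rewrite mulr_ge0 ?norm2sq_ge0 // ltW.
split; first by split=> // y /growth; have := gain_ge0 y; lra.
move=> y [feas y_min]; have := growth y feas; have := y_min x erefl.
move=> obj_le gain_le; apply/eqP; rewrite -subr_eq0; apply/eqP/norm2sq_eq0.
have : (2 * alpha)^-1 * norm2sq (y - x) <= 0 by lra.
by rewrite pmulr_rle0 // => n2_le0; apply/le_anti; rewrite n2_le0 norm2sq_ge0.
Qed.

End Sufficiency.

Section Necessity.
Variables (R : realFieldType) (n : nat) (alpha c : R).
Hypotheses (alpha_gt0 : 0 < alpha) (c_gt0 : 0 < c).

Definition antisign_witness (h : 'cV[R]_n) (S : {set 'I_n}) : 'cV[R]_n :=
  \col_i (if i \in S then (if 0 <= h i ord0 then - c else c) else 0).

Lemma antisign_witness_support (h : 'cV[R]_n) (S : {set 'I_n}) :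
  [set i | antisign_witness h S i ord0 != 0] = S.
Proof.
apply/setP => i; rewrite !inE mxE; case: (i \in S); last by rewrite eqxx.
by case: ifP; rewrite ?oppr_eq0 gt_eqF.
Qed.

Lemma antisign_witness_norminf (h : 'cV[R]_n) (S : {set 'I_n}) j : j \in S ->
  norminf (antisign_witness h S) = c.
Proof.
have abs_c b : `|(if b then - c else c)| = c by case: b; rewrite ?normrN gtr0_norm.
move=> jS; apply/le_anti/andP; split.
  apply/bigmax_leP; split=> [|i _]; first exact: ltW.
  by rewrite mxE; case: (i \in S); rewrite ?abs_c // normr0 ltW.
by apply: (bigmax_sup j) => //; rewrite mxE jS abs_c.
Qed.

Lemma P2obj_ray_upper (h : 'cV[R]_n) (S : {set 'I_n}) (t : R) :
  0 < t -> t * (1 + norm1 h) <= c ->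
  P2obj alpha (antisign_witness h S + t *: h) - P2obj alpha (antisign_witness h S) <=
  t * (norm1 (restrict h (~: S)) - (1 + c / alpha) * norm1 (restrict h S))
  + t ^+ 2 * ((2 * alpha)^-1 * norm2sq h).
Proof.
move=> t_gt0 t_small.
have a_gt0 : 0 < (2 * alpha)^-1 by rewrite invr_gt0 mulr_gt0.
have q_eq : c / alpha = 2 * (2 * alpha)^-1 * c by field; rewrite gt_eqF.
rewrite nsp_gap_sum /norm2sq mulr_sumr !mulr_sumr -big_split P2obj_diff /=.
apply: ler_sum => i _; rewrite !mxE q_eq.
have step_le : t * `|h i ord0| <= c.
  apply: le_trans t_small; rewrite ler_wpM2l ?ltW //.
  by have := coord_le_norm1 h i; lra.
case: (i \in S) => /=.
  exact: increment_upper_opposite a_gt0 c_gt0 t_gt0 step_le erefl.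
by rewrite normr0 add0r subr0 normrM (gtr0_norm t_gt0); lra.
Qed.

Lemma nsp_of_witness_minimizer m (A : 'M[R]_(m, n)) (h : 'cV[R]_n) (S : {set 'I_n}) :
  A *m h = 0 ->
  P2_minimizer A (A *m antisign_witness h S) alpha (antisign_witness h S) ->
  (1 + c / alpha) * norm1 (restrict h S) <= norm1 (restrict h (~: S)).
Proof.
move=> Ah0 [_ x0_min]; rewrite -subr_ge0.
have a_gt0 : 0 < (2 * alpha)^-1 by rewrite invr_gt0 mulr_gt0.
have norm_gt0 : 0 < 1 + norm1 h by have := norm1_ge0 h; lra.
apply: (@ge0_of_small_perturbations _ _ ((2 * alpha)^-1 * norm2sq h)
  (c / (1 + norm1 h))).
- by rewrite divr_gt0.
- by rewrite mulr_ge0 ?norm2sq_ge0 ?ltW.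
move=> t t_gt0 t_le; rewrite -(pmulr_rge0 _ t_gt0).
have feas : A *m (antisign_witness h S + t *: h) = A *m antisign_witness h S.
  by rewrite mulmxDr -scalemxAr Ah0 scaler0 addr0.
have t_small : t * (1 + norm1 h) <= c by rewrite -ler_pdivlMr.
have := x0_min _ feas; have := P2obj_ray_upper S t_gt0 t_small.
rewrite expr2; nra.
Qed.

End Necessity.

Theorem mainTheorem1 (R : realFieldType) (m n : nat) (A : 'M[R]_(m, n))
    (k : nat) (alpha c : R) (hk : (1 <= k)%N) (halpha : 0 < alpha) (hc : 0 < c) :
  (forall x0 : 'cV[R]_n, ksparse k x0 -> norminf x0 = c ->
     P2_unique_minimizer A (A *m x0) alpha x0)
  <->
  (forall (h : 'cV[R]_n) (S : {set 'I_n}), A *m h = 0 -> (#|S| <= k)%N ->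
     (1 + c / alpha) * norm1 (restrict h S) <= norm1 (restrict h (~: S))).
Proof.
split=> [recovery h S Ah0 card_S | nsp x0 sparse x0_inf].
  have [-> | [j jS]] := set_0Vmem S; first by rewrite norm1_restrict0 mulr0 norm1_ge0.
  have sparse : ksparse k (antisign_witness c h S).
    by rewrite /ksparse antisign_witness_support.
  have [x0_min _] := recovery _ sparse (antisign_witness_norminf hc h jS).
  exact: (nsp_of_witness_minimizer halpha hc Ah0 x0_min).
have x0_le_c i : `|x0 i ord0| <= c by rewrite -x0_inf; exact: le_bigmax.
apply: (unique_minimizer_of_growth halpha) => y feas.
have := P2obj_growth halpha (h := y - x0) x0_le_c.
rewrite [x0 + _]addrC subrK; apply; apply: nsp => //.
by rewrite mulmxBr feas subrr.
Qed.
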